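(* Let $k$ be a positive integer and let $K\subset\mathbb{R}^d$ be a centrally symmetric convex body. Let $\mathcal{K}=\{o_i+\tau_iK: i=1,\dots,n\}$ with $o_i\in\mathbb{R}^d$ and $\tau_1,\dots,\tau_n>0$. Suppose every hyperplane in $\mathbb{R}^d$ intersects the interiors of at most $k$ members of $\mathcal{K}$. Then some translate of $\frac1k\left(\sum_{i=1}^n\tau_i\right)K$ is contained in $\operatorname{conv}\bigcup\mathcal{K}$.
   Context: A convex body is a compact convex set with nonempty interior. *)

From mathcomp Require Import all_boot.
From Stdlib Require Import Reals.
Set Implicit Arguments.
Unset Strict Implicit.

Open Scope R_scope.

Definition point (d : nat) := 'I_d -> R.

Definition vadd d (x y : point d) : point d := fun i => x i + y i.
Definition vscale d (c : R) (x : point d) : point d := fun i => c * x i.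
Definition vzero d : point d := fun _ => 0.

Definition dot d (x y : point d) : R := \big[Rplus/0]_(i < d) (x i * y i).

(* Topology of R^d (via the product / sup metric, equivalent to Euclidean). *)
Definition interiorR d (S : point d -> Prop) (x : point d) : Prop :=
  exists eps, 0 < eps /\
    forall y : point d, (forall i, Rabs (y i - x i) < eps) -> S y.

Definition is_closed d (S : point d -> Prop) : Prop :=
  forall x : point d, ~ S x ->
    exists eps, 0 < eps /\
      forall y : point d, (forall i, Rabs (y i - x i) < eps) -> ~ S y.

Definition is_bounded d (S : point d -> Prop) : Prop :=
  exists M, forall x : point d, S x -> forall i, Rabs (x i) <= M.

(* Heine-Borel: compact in R^d = closed and bounded *)
Definition is_compact d (S : point d -> Prop) : Prop :=
  is_closed S /\ is_bounded S.

Definition is_convex d (S : point d -> Prop) : Prop :=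
  forall x y : point d, S x -> S y -> forall t, 0 <= t <= 1 ->
    S (vadd (vscale t x) (vscale (1 - t) y)).

Definition convex_body d (K : point d -> Prop) : Prop :=
  is_compact K /\ is_convex K /\ exists x, interiorR K x.

Definition centrally_symmetric d (K : point d -> Prop) : Prop :=
  exists c : point d, forall x, K x ->
    K (vadd (vscale 2 c) (vscale (-1) x)).

Definition homothet d (o : point d) (tau : R) (K : point d -> Prop) : point d -> Prop :=
  fun x => exists y, K y /\ x = vadd o (vscale tau y).

(* hyperplane {x | <a,x> = b}, a <> 0 *)
Definition hyperplane d (a : point d) (b : R) : point d -> Prop :=
  fun x => dot a x = b.

Fixpoint comb d (l : list (R * point d)) : point d :=
  match l with
  | nil => @vzero d
  | cons (w, p) l' => vadd (vscale w p) (comb l')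
  end.
Fixpoint wsum d (l : list (R * point d)) : R :=
  match l with
  | nil => 0
  | cons (w, _) l' => w + wsum l'
  end.

Definition convhull d (S : point d -> Prop) : point d -> Prop :=
  fun x => exists l : list (R * point d),
    (forall wp, List.In wp l -> 0 <= fst wp /\ S (snd wp)) /\
    wsum l = 1 /\ x = comb l.

(* Let c be the centre of K, T = sum_i tau_i and lam = T / k.  The body lam K,
   translated so that its centre is the tau-weighted mean of the centres
   o_i + tau_i c, lies in the convex hull.  Otherwise Farkas' lemma gives a
   linear functional v strictly separating some point p = mean + lam (x - c),
   x in K, from all the points o_i + tau_i x and o_i + tau_i (2c - x).  Under v
   the i-th homothet covers the interval of radius tau_i |v (x - c)| around
   v (o_i + tau_i c), and the hyperplane hypothesis says that no point of the
   line lies in more than k of these open intervals.  For intervals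
   I_i = [a_i, b_i] in [b, +oo) of depth at most k one has
   (sum |I_i|)^2 <= k sum |I_i| (a_i + b_i - 2 b); taking for b the leftmost
   endpoint, which lies to the right of v p, this contradicts the choice of the
   mean. *)

From mathcomp Require Import all_boot.
From mathcomp Require Import Rstruct.
From Stdlib Require Import Reals Lra Psatz FunctionalExtensionality Classical.
Set Implicit Arguments.
Unset Strict Implicit.
Open Scope R_scope.

Lemma Rle_big (I : eqType) (r : seq I) (F G : I -> R) :
  (forall i, i \in r -> F i <= G i) ->
  \big[Rplus/0]_(i <- r) F i <= \big[Rplus/0]_(i <- r) G i.
Proof.
move=> FG; rewrite big_seq [X in _ <= X]big_seq.
by apply: (big_ind2 (fun x y => x <= y)) => [|x1 x2 y1 y2|i /FG]//=; lra.
Qed.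

Lemma Rbig_ge0 (I : eqType) (r : seq I) (F : I -> R) :
  (forall i, i \in r -> 0 <= F i) -> 0 <= \big[Rplus/0]_(i <- r) F i.
Proof.
by move=> F0; have := @Rle_big I r (fun=> 0) F F0; rewrite big1_eq.
Qed.

Lemma Rbig_le_count (I : eqType) (s : seq I) (a : pred I) (F : I -> R) c :
  (forall x, x \in s -> F x <= if a x then c else 0) ->
  \big[Rplus/0]_(x <- s) F x <= c * INR (count a s).
Proof.
elim: s => [|x s IHs] Fs; first by rewrite big_nil /=; lra.
have /IHs IH : forall y, y \in s -> F y <= if a y then c else 0.
  by move=> y ys; apply: Fs; rewrite inE ys orbT.
rewrite big_cons /= plus_INR; have := Fs x (mem_head x s).
by case: (a x) => /=; lra.
Qed.

Lemma exists_argmin (T : eqType) (f : T -> R) (s : seq T) :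
  s != [::] -> exists2 x, x \in s & forall y, y \in s -> f x <= f y.
Proof.
elim: s => [//|x [|y s] IHs] _.
  by exists x => [|z]; rewrite ?mem_seq1 // => /eqP ->; lra.
have [m ms minm] := IHs isT; case: (Rle_lt_dec (f x) (f m)) => [xm|mx].
  exists x => [|z]; first exact: mem_head.
  by rewrite inE => /predU1P [->|/minm]; lra.
exists m => [|z]; first by rewrite inE ms orbT.
by rewrite inE => /predU1P [->|/minm]; lra.
Qed.

Lemma exists_lt_above (xs : seq R) r :
  exists2 w, w < r & forall x, x \in xs -> x < r -> x < w.
Proof.
elim: xs => [|x xs [w wr IHw]]; first by exists (r - 1) => //; lra.
case: (Rlt_le_dec x r) => [xr|rx].
  exists (Rmax w ((x + r) / 2)) => [|y]; first by apply: Rmax_lub_lt; lra.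
  rewrite inE => /predU1P [-> _|/IHw yw yr]; first by have := Rmax_r w ((x + r) / 2); lra.
  by have := Rmax_l w ((x + r) / 2); have := yw yr; lra.
exists w => // y; rewrite inE => /predU1P [->|]; [lra | exact: IHw].
Qed.

Lemma In_index_enum (T : finType) (x : T) : List.In x (index_enum T).
Proof.
elim: (index_enum T) (mem_index_enum x) => //= y s IHs.
by rewrite inE => /predU1P [->|/IHs]; [left|right].
Qed.

Definition len (iv : R * R) := iv.2 - iv.1.
Definition moment (b : R) (iv : R * R) := len iv * (iv.1 + iv.2 - 2 * b).
Definition covers (w : R) (iv : R * R) : bool := Rltb iv.1 w && Rltb w iv.2.

Lemma coversP w iv : reflect (iv.1 < w < iv.2) (covers w iv).
Proof.
by apply: (iffP andP) => -[h1 h2]; split; exact/RltbP.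
Qed.

Definition lower (r : R) (iv : R * R) := (Rmin iv.1 r, r).
Definition upper (r : R) (iv : R * R) := (Rmax iv.1 r, iv.2).

Lemma covers_lower r w iv : r <= iv.2 -> covers w (lower r iv) -> covers w iv.
Proof.
move=> ? /coversP /= [w1 w2]; apply/coversP.
by case: (Rle_lt_dec iv.1 r) => ?; [rewrite Rmin_left in w1|rewrite Rmin_right in w1]; lra.
Qed.

Lemma covers_upper r w iv : covers w (upper r iv) -> covers w iv.
Proof. by move=> /coversP /= [? ?]; apply/coversP; have := Rmax_l iv.1 r; lra. Qed.

Lemma len_split r iv : len iv = len (lower r iv) + len (upper r iv).
Proof.
rewrite /len /=; case: (Rle_lt_dec iv.1 r) => ?.
  by rewrite Rmin_left ?Rmax_right; lra.
by rewrite Rmin_right ?Rmax_left; lra.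
Qed.

Lemma moment_split b r iv :
  moment b iv = moment b (lower r iv) + moment b (upper r iv).
Proof.
rewrite /moment /len /=; case: (Rle_lt_dec iv.1 r) => ?.
  by rewrite Rmin_left ?Rmax_right; [ring|lra|lra].
by rewrite Rmin_right ?Rmax_left; [ring|lra|lra].
Qed.

Lemma moment_shift b r iv : moment b iv = moment r iv + 2 * (r - b) * len iv.
Proof. by rewrite /moment; ring. Qed.

Lemma sum_lower_upper r x (l : seq (R * R)) (F : R * R -> R) : x \in l ->
  (forall iv, F iv = F (lower r iv) + F (upper r iv)) -> F (upper r x) = 0 ->
  \big[Rplus/0]_(iv <- l) F iv =
  \big[Rplus/0]_(u <- map (lower r) l) F u + \big[Rplus/0]_(t <- map (upper r) (rem x l)) F t.
Proof.
move=> xl FE F0; rewrite !big_map (eq_bigr _ (fun iv _ => FE iv)) big_split /=.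
by congr (_ + _); rewrite (big_rem _ xl) /= F0 Rplus_0_l.
Qed.

Lemma count_covers_upper r x w (l : seq (R * R)) :
  (count (covers w) (map (upper r) (rem x l)) <= count (covers w) l)%nat.
Proof.
rewrite count_map; apply: leq_trans (sub_count (@covers_upper r w) _) _.
by rewrite count_rem leq_subr.
Qed.

Lemma count_covers_lower r w (l : seq (R * R)) :
  (forall iv, iv \in l -> r <= iv.2) ->
  (count (covers w) (map (lower r) l) <= count (covers w) l)%nat.
Proof.
move=> lr; rewrite count_map.
have sub : {in l, preim (lower r) (covers w) =1 predI (preim (lower r) (covers w)) (covers w)}.
  move=> iv ivl /=; case cov: (covers w (lower r iv)) => //=.
  by rewrite (covers_lower (lr iv ivl) cov).
by rewrite (eq_in_count sub); apply: sub_count => iv /andP [].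
Qed.

Lemma sum_len_common_right_le (k : nat) b r (U : seq (R * R)) : b <= r ->
  (forall u, u \in U -> b <= u.1 <= r /\ u.2 = r) ->
  (forall w, (count (covers w) U <= k)%nat) ->
  \big[Rplus/0]_(u <- U) len u <= INR k * (r - b).
Proof.
move=> br Ur depthU; have [w wr ltw] := exists_lt_above (map fst U) r.
apply: Rle_trans (@Rbig_le_count _ U (covers w) len (r - b) _) _.
  move=> [u1 u2] uU; have /= [[bu ur] ->] := Ur _ uU; rewrite /len /=.
  case: (Rle_lt_dec r u1) => [ru1|u1r]; first by case: (covers w _); lra.
  have /= u1w := ltw _ (map_f fst uU) u1r.
  have -> : covers w (u1, r) by apply/coversP => /=; lra.
  lra.
have := le_INR _ _ (elimT leP (depthU w)).
by move: (INR (count _ _)) => c; nra.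
Qed.

Lemma sqr_add_le (k LT LU GT GU D : R) :
  0 <= k -> 0 <= LT -> 0 <= LU -> 0 <= D ->
  LT ^ 2 <= k * GT -> LU <= k * D -> D * LU <= GU ->
  (LU + LT) ^ 2 <= k * (GU + (GT + 2 * D * LT)).
Proof. by move=> *; nra. Qed.

(* Cut every interval at the smallest right endpoint r.  The left pieces all
   end at r, so a point just left of r meets each one of positive length and
   their total length is at most k (r - b); the right pieces form a smaller
   family in [r, +oo). *)
Lemma sqr_sum_len_le_depth_moment (k : nat) b (l : seq (R * R)) :
  (forall iv, iv \in l -> b <= iv.1 <= iv.2) ->
  (forall w, (count (covers w) l <= k)%nat) ->
  (\big[Rplus/0]_(iv <- l) len iv) ^ 2 <= INR k * \big[Rplus/0]_(iv <- l) moment b iv.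
Proof.
move szl: (size l) => n; elim: n b l szl => [|n IHn] b l szl lb depth.
  by rewrite (size0nil szl) !big_nil; lra.
have [x0 x0l minx0] : exists2 x0, x0 \in l & forall iv, iv \in l -> x0.2 <= iv.2.
  by apply: exists_argmin; rewrite -size_eq0 szl.
have [bx0 x0r] := lb x0 x0l; set r := x0.2 in minx0 x0r *.
set U := map (lower r) l; set T := map (upper r) (rem x0 l).
have upper_x0 : upper r x0 = (r, r) by rewrite /upper Rmax_right.
have depthT w : (count (covers w) T <= k)%nat.
  exact: leq_trans (count_covers_upper r x0 w l) (depth w).
have depthU w : (count (covers w) U <= k)%nat.
  exact: leq_trans (count_covers_lower w minx0) (depth w).
have T_ge iv : iv \in T -> r <= iv.1 <= iv.2.
  case/mapP=> [[a c] /mem_rem acl ->] /=; have /= [_ ac] := lb _ acl.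
  by have /= rc := minx0 _ acl; split; [exact: Rmax_r | apply: Rmax_lub; lra].
have U_le u : u \in U -> b <= u.1 <= r /\ u.2 = r.
  case/mapP=> [[a c] acl ->] /=; have /= [ba _] := lb _ acl.
  by split; [split; [apply: Rmin_glb; lra | exact: Rmin_r] | ].
have szT : size T = n by rewrite size_map size_rem // szl.
have IHT := IHn r T szT T_ge depthT.
have br : b <= r by lra.
have LU_le := sum_len_common_right_le br U_le depthU.
have GU_ge : (r - b) * \big[Rplus/0]_(u <- U) len u <= \big[Rplus/0]_(u <- U) moment b u.
  rewrite big_distrr; apply: Rle_big => -[a c] /U_le /= [[ba ar] ->].
  by rewrite /moment /len /=; nra.
have LT_ge0 : 0 <= \big[Rplus/0]_(t <- T) len t.
  by apply: Rbig_ge0 => -[a c] /T_ge; rewrite /len /=; lra.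
have LU_ge0 : 0 <= \big[Rplus/0]_(u <- U) len u.
  by apply: Rbig_ge0 => -[a c] /U_le; rewrite /len /=; lra.
rewrite (sum_lower_upper x0l (@len_split r)); last by rewrite upper_x0 /len /=; ring.
rewrite (sum_lower_upper x0l (@moment_split b r)); last by rewrite upper_x0 /moment /len /=; ring.
have GT_shift : \big[Rplus/0]_(t <- T) moment b t =
    \big[Rplus/0]_(t <- T) moment r t + 2 * (r - b) * \big[Rplus/0]_(t <- T) len t.
  by rewrite big_distrr -big_split; apply: eq_bigr => t _; exact: moment_shift.
rewrite GT_shift; apply: sqr_add_le => //; [exact: pos_INR | lra].
Qed.

Definition interval_around (c r : R) : R * R := (c - r, c + r).

Lemma centered_intervals_bound (I : eqType) (s : seq I) (k : nat) (ctr rad : I -> R) sigma b :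
  0 <= sigma -> (forall i, 0 <= rad i) -> (forall i, b <= ctr i - rad i * sigma) ->
  (forall w, (count (fun i => covers w (interval_around (ctr i) (rad i * sigma)%R)) s <= k)%nat) ->
  sigma * (\big[Rplus/0]_(i <- s) rad i) ^ 2 <=
  INR k * \big[Rplus/0]_(i <- s) (rad i * (ctr i - b)).
Proof.
move=> sigma_ge0 rad_ge0 b_le depth.
have sum_ge0 : 0 <= \big[Rplus/0]_(i <- s) (rad i * (ctr i - b)).
  apply: (big_ind (fun x => 0 <= x)) => [|x y|i _]; [lra|lra|].
  by have := b_le i; have := rad_ge0 i; nra.
have [->|sigma_gt0] := Req_dec sigma 0.
  by have := pos_INR k; rewrite Rmult_0_l; nra.
set J := fun i => interval_around (ctr i) (rad i * sigma).
have bJ : forall iv, iv \in map J s -> b <= iv.1 <= iv.2.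
  by move=> _ /mapP [i _ ->] /=; have := b_le i; have := rad_ge0 i; nra.
have depthJ w : (count (covers w) (map J s) <= k)%nat by rewrite count_map; exact: depth.
have := sqr_sum_len_le_depth_moment bJ depthJ; rewrite !big_map.
have -> : \big[Rplus/0]_(i <- s) len (J i) = 2 * sigma * \big[Rplus/0]_(i <- s) rad i.
  by rewrite big_distrr; apply: eq_bigr => i _; rewrite /len /=; ring.
have -> : \big[Rplus/0]_(i <- s) moment b (J i) =
    4 * sigma * \big[Rplus/0]_(i <- s) (rad i * (ctr i - b)).
  by rewrite big_distrr; apply: eq_bigr => i _; rewrite /moment /len /=; ring.
move: (\big[Rplus/0]_(i <- s) rad i) (\big[Rplus/0]_(i <- s) (rad i * (ctr i - b))) sum_ge0 => T S.
have := pos_INR k; nra.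
Qed.

Lemma dotDr d (v x y : point d) : dot v (vadd x y) = dot v x + dot v y.
Proof. by rewrite /dot -big_split; apply: eq_bigr => i _; rewrite /vadd /=; ring. Qed.

Lemma dotZr d (v x : point d) a : dot v (vscale a x) = a * dot v x.
Proof. by rewrite /dot big_distrr; apply: eq_bigr => i _; rewrite /vscale /=; ring. Qed.

Lemma dot0r d (v : point d) : dot v (@vzero d) = 0.
Proof. by rewrite /dot big1 // => i _; rewrite /vzero; ring. Qed.

Lemma dotC d (x y : point d) : dot x y = dot y x.
Proof. by apply: eq_bigr => i _; ring. Qed.

Lemma dot_sumr d (I : Type) (r : seq I) (v : point d) (F : I -> point d) :
  dot v (fun j => \big[Rplus/0]_(i <- r) F i j) = \big[Rplus/0]_(i <- r) dot v (F i).
Proof.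
rewrite /dot (eq_bigr (fun j => \big[Rplus/0]_(i <- r) (v j * F i j))).
  exact: exchange_big.
by move=> j _; rewrite big_distrr.
Qed.

Lemma dot_self_gt0 d (x : point d) : x <> @vzero d -> 0 < dot x x.
Proof.
move=> x_neq0; have [j xj] : exists j, x j <> 0.
  apply: NNPP => nox; apply: x_neq0; apply: functional_extensionality => j.
  by apply: NNPP => xj; apply: nox; exists j.
rewrite /dot (bigD1 j) //=.
have rest_ge0 : 0 <= \big[Rplus/0]_(i | i != j) (x i * x i).
  by apply: (big_ind (fun y => 0 <= y)) => [|y z|i _]; [lra|lra|nra].
by apply: Rplus_lt_le_0_compat => //; nra.
Qed.

Lemma dot_comb d (y : point d) (l : seq (R * point d)) :
  dot y (comb l) = \big[Rplus/0]_(wp <- l) (wp.1 * dot y wp.2).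
Proof.
elim: l => [|[w p] l IHl]; first by rewrite big_nil dot0r.
by rewrite big_cons /= dotDr dotZr IHl.
Qed.

Definition cone d (S : point d -> Prop) (b : point d) : Prop :=
  exists l : seq (R * point d),
    (forall wp, List.In wp l -> 0 <= fst wp /\ S (snd wp)) /\ b = comb l.

Lemma cone_mono d (S S' : point d -> Prop) b :
  (forall x, S x -> S' x) -> cone S b -> cone S' b.
Proof. by move=> SS' [l [lS ->]]; exists l; split=> // wp /lS [? /SS']. Qed.

Lemma cone_add d (S : point d -> Prop) c w q :
  cone S c -> 0 <= w -> S q -> cone S (vadd c (vscale w q)).
Proof.
move=> [l [lS ->]] w0 Sq; exists ((w, q) :: l); split.
  by move=> wp [<-|/lS //]; exact: conj.
by apply: functional_extensionality => j; rewrite /= /vadd /vscale; ring.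
Qed.

Lemma cone_dot_ge0 d (S : point d -> Prop) y b :
  (forall x, S x -> 0 <= dot y x) -> cone S b -> 0 <= dot y b.
Proof.
move=> Sy [l [lS ->]]; rewrite dot_comb.
elim: l lS => [|[w p] l IHl] lS; first by rewrite big_nil; lra.
rewrite big_cons; have /= [w0 /Sy yp] := lS _ (or_introl erefl).
by have := IHl (fun wp lwp => lS wp (or_intror lwp)); rewrite /=; nra.
Qed.

Definition kernel_proj d (y q x : point d) : point d :=
  vadd x (vscale (- (dot y x / dot y q)) q).

Lemma dot_kernel_proj d (z y q x : point d) :
  dot z (kernel_proj y q x) = dot (vadd z (vscale (- (dot z q / dot y q)) y)) x.
Proof.
rewrite /kernel_proj dotDr dotZr [RHS]dotC dotDr dotZr.
by rewrite (dotC x z) (dotC x y) /Rdiv; ring.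
Qed.

Lemma kernel_proj_lin d (y q x x' : point d) w :
  kernel_proj y q (vadd x (vscale w x')) =
  vadd (kernel_proj y q x) (vscale w (kernel_proj y q x')).
Proof.
rewrite /kernel_proj dotDr dotZr; apply: functional_extensionality => j.
by rewrite /vadd /vscale /Rdiv; ring.
Qed.

Lemma kernel_proj_self d (y q : point d) : dot y q <> 0 -> kernel_proj y q q = @vzero d.
Proof.
move=> yq; apply: functional_extensionality => j.
by rewrite /kernel_proj /vadd /vscale /vzero; field.
Qed.

Lemma cone_kernel_proj d (y q x : point d) (qs : seq (point d)) :
  cone (fun z => List.In z (map (kernel_proj y q) qs)) (kernel_proj y q x) ->
  exists c th, cone (fun z => List.In z qs) c /\ x = vadd c (vscale th q).
Proof.
move=> [l []]; elim: l x => [|[w p] l IHl] x lS E.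
  exists (@vzero d), (dot y x / dot y q); split; first by exists nil.
  apply: functional_extensionality => j; have := equal_f E j.
  by rewrite /= /kernel_proj /vadd /vscale /vzero; lra.
have /= [w0 /List.in_map_iff [q' [pE q'qs]]] := lS _ (or_introl erefl); subst p.
have /IHl [|c [th [cc E']]] : kernel_proj y q (vadd x (vscale (- w) q')) = comb l.
- rewrite kernel_proj_lin E /=; apply: functional_extensionality => j.
  by rewrite /vadd /vscale; ring.
- by move=> wp lwp; apply: lS; right.
exists (vadd c (vscale w q')), th; split; first exact: cone_add.
apply: functional_extensionality => j; have := equal_f E' j.
by rewrite /vadd /vscale; lra.
Qed.

(* Fourier-Motzkin elimination: when the certificate y for qs fails on q,
   project along q onto the kernel of y and recurse; dot_kernel_proj pulls the
   new certificate back. *)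
Lemma farkas d (qs : seq (point d)) (b : point d) :
  ~ cone (fun x => List.In x qs) b ->
  exists y, (forall q, List.In q qs -> 0 <= dot y q) /\ dot y b < 0.
Proof.
move sz: (size qs) => n; elim: n qs sz b => [|n IHn] [|q qs] //= sz b notcone.
  have b_neq0 : b <> @vzero d by move=> b0; apply: notcone; exists nil.
  exists (vscale (-1) b); split=> //.
  by rewrite dotC dotZr; have := dot_self_gt0 b_neq0; lra.
have {}sz : size qs = n by case: sz.
have [y [y_qs yb]] : exists y, (forall x, List.In x qs -> 0 <= dot y x) /\ dot y b < 0.
  apply: IHn => // /(cone_mono (S' := fun x => List.In x (q :: qs))) c.
  by apply: notcone; apply: c => x qx; right.
have [yq|yq] := Rle_lt_dec 0 (dot y q).
  by exists y; split=> // x [<-|/y_qs].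
set kp := kernel_proj y q.
have [y2 [y2_qs y2b]] : exists y2,
    (forall x, List.In x (map kp qs) -> 0 <= dot y2 x) /\ dot y2 (kp b) < 0.
  apply: IHn; first by rewrite size_map.
  move=> /cone_kernel_proj [c [th [cc bE]]]; apply: notcone.
  have yc := cone_dot_ge0 y_qs cc.
  have ybE : dot y b = dot y c + th * dot y q by rewrite bE dotDr dotZr.
  have th_ge0 : 0 <= th by nra.
  rewrite bE; apply: cone_add => //; last by left.
  by apply: cone_mono cc => x qx; right.
exists (vadd y2 (vscale (- (dot y2 q / dot y q)) y)); split; last by rewrite -dot_kernel_proj.
move=> x [<-|xqs]; rewrite -dot_kernel_proj.
  by rewrite kernel_proj_self ?dot0r; [lra|lra].
by apply: y2_qs; apply: List.in_map.
Qed.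

(* Lifting x to (x, 1) turns convex combinations into conic ones. *)
Definition hom d (x : point d) (s : R) : point d.+1 :=
  fun i => if unlift ord_max i is Some j then x j else s.

Definition dehom d (y : point d.+1) : point d := fun j => y (lift ord_max j).

Lemma widen_ord_max d (j : 'I_d) : widen_ord (leqnSn d) j = lift ord_max j.
Proof. by apply: ord_inj; rewrite lift_max. Qed.

Lemma dehom_hom d (x : point d) s : dehom (hom x s) = x.
Proof. by apply: functional_extensionality => j; rewrite /dehom /hom liftK. Qed.

Lemma hom_ord_max d (x : point d) s : hom x s ord_max = s.
Proof. by rewrite /hom unlift_none. Qed.

Lemma dot_hom d (y : point d.+1) (x : point d) s :
  dot y (hom x s) = dot (dehom y) x + y ord_max * s.
Proof.
rewrite /dot big_ord_recr /= hom_ord_max; congr (_ + _).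
by apply: eq_bigr => j _; rewrite widen_ord_max /dehom /hom liftK.
Qed.

Lemma comb_dehom d (l : seq (R * point d.+1)) :
  dehom (comb l) = comb (map (fun wp => (wp.1, dehom wp.2)) l).
Proof.
elim: l => [|[w p] l IHl] /=; first by apply: functional_extensionality.
by rewrite -IHl.
Qed.

Lemma comb_ord_max d (l : seq (R * point d.+1)) :
  (forall wp, List.In wp l -> wp.2 ord_max = 1) ->
  comb l ord_max = wsum (map (fun wp => (wp.1, dehom wp.2)) l).
Proof.
elim: l => [|[w p] l IHl] //= l1; rewrite /vadd /vscale /= IHl; last by move=> wp lwp; apply: l1; right.
by have /= -> := l1 (w, p) (or_introl erefl); ring.
Qed.

Lemma convhull_of_cone d (S : point d -> Prop) p :
  cone (fun z => exists2 x, S x & z = hom x 1) (hom p 1) -> convhull S p.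
Proof.
move=> [l [lS E]]; exists (map (fun wp => (wp.1, dehom wp.2)) l); split; [|split].
- move=> _ /List.in_map_iff [[w z] [<- lwz]] /=.
  by have /= [w0 [x Sx ->]] := lS _ lwz; rewrite dehom_hom.
- rewrite -comb_ord_max -?E ?hom_ord_max // => wp /lS [_ [x _ ->]].
  exact: hom_ord_max.
- by rewrite -comb_dehom -E dehom_hom.
Qed.

Lemma convhull_mono d (S S' : point d -> Prop) p :
  (forall x, S x -> S' x) -> convhull S p -> convhull S' p.
Proof. by move=> SS' [l [lS wl]]; exists l; split=> // wp /lS [? /SS']. Qed.

Lemma convhull_or_separated d (qs : seq (point d)) p :
  convhull (fun x => List.In x qs) p \/
  exists v, forall q, List.In q qs -> dot v p < dot v q.
Proof.
set hqs := map (fun x => hom x 1) qs.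
have [hp|nhp] := classic (cone (fun z => List.In z hqs) (hom p 1)).
  left; apply: convhull_of_cone; apply: cone_mono hp => z /List.in_map_iff [x [<- qx]].
  by exists x.
right; have [y [y_qs yp]] := farkas nhp; exists (dehom y) => q qqs.
have := y_qs _ (List.in_map (fun x => hom x 1) _ _ qqs).
by move: yp; rewrite !dot_hom; lra.
Qed.

Lemma interior_mem d (S : point d -> Prop) x : interiorR S x -> S x.
Proof. by move=> [e [e0 Se]]; apply: Se => i; rewrite Rminus_diag Rabs_R0. Qed.

Lemma interior_convex_comb d (K : point d -> Prop) z y th :
  is_convex K -> interiorR K z -> K y -> 0 <= th < 1 ->
  interiorR K (vadd (vscale (1 - th) z) (vscale th y)).
Proof.
move=> K_convex [e [e0 Kz]] Ky th01; exists ((1 - th) * e); split; first by nra.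
move=> w w_near; set z' := fun j => (w j - th * y j) / (1 - th).
have Kz' : K z'.
  apply: Kz => i; have := w_near i; rewrite /z' /vadd /vscale => wi.
  have -> : (w i - th * y i) / (1 - th) - z i = (w i - ((1 - th) * z i + th * y i)) / (1 - th).
    by field; lra.
  rewrite Rabs_mult Rabs_inv (Rabs_pos_eq (1 - th)); last by lra.
  apply: (Rmult_lt_reg_r (1 - th)); first by lra.
  by rewrite Rmult_assoc Rinv_l; nra.
have := K_convex z' y Kz' Ky (1 - th) ltac:(lra).
congr K; apply: functional_extensionality => j.
by rewrite /vadd /vscale /z'; field; lra.
Qed.

Lemma center_interior d (K : point d -> Prop) c :
  is_convex K -> (exists z, interiorR K z) ->
  (forall x, K x -> K (vadd (vscale 2 c) (vscale (-1) x))) -> interiorR K c.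
Proof.
move=> K_convex [z z_int] K_sym.
have mz_int : interiorR K (vadd (vscale 2 c) (vscale (-1) z)).
  have [e [e0 Kz]] := z_int; exists e; split=> // w w_near.
  have Kmw : K (vadd (vscale 2 c) (vscale (-1) w)).
    apply: Kz => i; have := w_near i; rewrite /vadd /vscale.
    by rewrite -Rabs_Ropp; congr (Rabs _ < _); ring.
  have := K_sym _ Kmw; congr K; apply: functional_extensionality => j.
  by rewrite /vadd /vscale; ring.
have := interior_convex_comb K_convex z_int (interior_mem mz_int) (th := 1 / 2) ltac:(lra).
congr interiorR; apply: functional_extensionality => j.
by rewrite /vadd /vscale; field.
Qed.

Lemma homothet_interior d (K : point d -> Prop) o tau z :
  0 < tau -> interiorR K z -> interiorR (homothet o tau K) (vadd o (vscale tau z)).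
Proof.
move=> tau0 [e [e0 Kz]]; exists (tau * e); split; first by nra.
move=> w w_near; exists (fun j => (w j - o j) / tau); split.
  apply: Kz => i; have := w_near i; rewrite /vadd /vscale => wi.
  have -> : (w i - o i) / tau - z i = (w i - (o i + tau * z i)) / tau by field; lra.
  rewrite Rabs_mult Rabs_inv (Rabs_pos_eq tau); last by lra.
  apply: (Rmult_lt_reg_r tau) => //.
  by rewrite Rmult_assoc Rinv_l; nra.
by apply: functional_extensionality => j; rewrite /vadd /vscale; field; lra.
Qed.

Section Homothets.

Variables (d k n : nat) (K : point d -> Prop) (o : 'I_n -> point d) (tau : 'I_n -> R).
Variables (c : point d).

Hypothesis k_gt0 : (0 < k)%nat.
Hypothesis n_gt0 : (0 < n)%nat.
Hypothesis K_convex : is_convex K.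
Hypothesis c_interior : interiorR K c.
Hypothesis K_sym : forall x, K x -> K (vadd (vscale 2 c) (vscale (-1) x)).
Hypothesis tau_gt0 : forall i, 0 < tau i.
Hypothesis depth_le : forall (a : point d) (b : R), (exists j, a j <> 0) ->
  forall s : seq 'I_n, uniq s ->
    (forall i, i \in s ->
       exists x, interiorR (homothet (o i) (tau i) K) x /\ hyperplane a b x) ->
    (size s <= k)%nat.

Definition center i := vadd (o i) (vscale (tau i) c).

Lemma segment_interior x th : K x -> Rabs th < 1 ->
  interiorR K (vadd c (vscale th (vadd x (vscale (-1) c)))).
Proof.
move=> Kx th1; have [th0|th0] := Rle_lt_dec 0 th.
  have := interior_convex_comb K_convex c_interior Kx (th := th).
  rewrite Rabs_pos_eq // in th1; move=> /(_ ltac:(lra)); congr interiorR.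
  by apply: functional_extensionality => j; rewrite /vadd /vscale; ring.
have := interior_convex_comb K_convex c_interior (K_sym Kx) (th := - th).
rewrite Rabs_left // in th1; move=> /(_ ltac:(lra)); congr interiorR.
by apply: functional_extensionality => j; rewrite /vadd /vscale; ring.
Qed.

Lemma slab_depth_le v x w : (exists j, v j <> 0) -> K x ->
  (count (fun i => covers w (interval_around (dot v (center i))
                      (tau i * Rabs (dot v x - dot v c))%R)) (index_enum 'I_n) <= k)%nat.
Proof.
move=> v_neq0 Kx; rewrite -size_filter; apply: (depth_le v_neq0 (b := w)).
  exact/filter_uniq/index_enum_uniq.
move=> i; rewrite mem_filter => /andP [/coversP /= w_near _].
set s := dot v x - dot v c in w_near *; set ctr := dot v (center i) in w_near *.
have tau0 := tau_gt0 i.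
have s_neq0 : s <> 0 by move=> s0; rewrite s0 Rabs_R0 in w_near; lra.
set th := (w - ctr) / (tau i * s).
have th_s : th * (tau i * s) = w - ctr by rewrite /th; field; lra.
have th1 : Rabs th < 1.
  have : Rabs th * (tau i * Rabs s) < tau i * Rabs s.
    rewrite -(Rabs_pos_eq (tau i)) -?Rabs_mult ?th_s; last by lra.
    by rewrite Rabs_mult (Rabs_pos_eq (tau i)); [apply: Rabs_def1; lra|lra].
  by have := Rabs_pos_lt _ s_neq0; nra.
exists (vadd (o i) (vscale (tau i) (vadd c (vscale th (vadd x (vscale (-1) c)))))).
split; first exact/homothet_interior/segment_interior.
move: th_s; rewrite /hyperplane /ctr /center /s !(dotDr, dotZr); lra.
Qed.

Let T := \big[Rplus/0]_(i < n) tau i.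
Let lam := T / INR k.

(* Centres lam K at the tau-weighted mean of the centres of the homothets. *)
Definition translation : point d :=
  vadd (vscale (/ T) (fun j => \big[Rplus/0]_(i < n) (tau i * center i j))) (vscale (- lam) c).

Lemma T_gt0 : 0 < T.
Proof.
rewrite /T (bigD1 (Ordinal n_gt0)) //=; apply: Rplus_lt_le_0_compat => //.
by apply: (big_ind (fun x => 0 <= x)) => [|x y|i _]; [lra|lra|have := tau_gt0 i; lra].
Qed.

Lemma dot_translation v x :
  dot v (vadd translation (vscale lam x)) =
  / T * \big[Rplus/0]_(i < n) (tau i * dot v (center i)) + lam * (dot v x - dot v c).
Proof.
rewrite /translation !(dotDr, dotZr) (dot_sumr _ _ (fun i => vscale (tau i) (center i))).
under eq_bigr => i _ do rewrite dotZr.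
by rewrite Rplus_assoc; congr (_ + _); ring.
Qed.

Lemma separation_contra v x : K x ->
  (forall i, dot v (vadd translation (vscale lam x)) <
               dot v (center i) - tau i * Rabs (dot v x - dot v c)) -> False.
Proof.
move=> Kx below; set sigma := Rabs (dot v x - dot v c) in below.
have v_neq0 : exists j, v j <> 0.
  apply: NNPP => v0; have v0j j : v j = 0 by apply: NNPP => vj; apply: v0; exists j.
  have dot0 y : dot v y = 0 by rewrite /dot big1 // => j _; rewrite v0j Rmult_0_l.
  by have := below (Ordinal n_gt0); rewrite /sigma !dot0 Rminus_0_r Rabs_R0; lra.
have [i0 _ min_i0] : exists2 i0, i0 \in index_enum 'I_n & forall i, i \in index_enum 'I_n ->
    dot v (center i0) - tau i0 * sigma <= dot v (center i) - tau i * sigma.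
  apply: exists_argmin; apply/eqP => enum0.
  by have := mem_index_enum (Ordinal n_gt0); rewrite enum0.
set b := dot v (center i0) - tau i0 * sigma.
have := @centered_intervals_bound _ (index_enum 'I_n) k (fun i => dot v (center i)) tau
  sigma b (Rabs_pos _) (fun i => Rlt_le _ _ (tau_gt0 i)) (fun i => min_i0 i (mem_index_enum i))
  (fun w => slab_depth_le w v_neq0 Kx).
have -> : \big[Rplus/0]_(i < n) (tau i * (dot v (center i) - b)) =
    \big[Rplus/0]_(i < n) (tau i * dot v (center i)) + - b * T.
  by rewrite /T big_distrr -big_split; apply: eq_bigr => i _ /=; ring.
have := below i0; have := dot_translation v x; rewrite -/b /sigma.
move: (dot v _) (\big[Rplus/0]_(i < n) _) (dot v x - dot v c) => dp S s pE pb bound.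
have lamk : lam * INR k = T.
  by rewrite /lam; field; apply: not_0_INR => k0; move: k_gt0; rewrite k0.
have SE : S = T * (dp - lam * s) by rewrite pE; field; exact: Rgt_not_eq T_gt0.
have expand : INR k * (S + - b * T) = - (INR k * T * (b - dp)) - T ^ 2 * s.
  by rewrite SE -lamk; ring.
have gap : 0 < INR k * T * (b - dp).
  apply: Rmult_lt_0_compat; last by lra.
  exact: Rmult_lt_0_compat (lt_0_INR _ (elimT ltP k_gt0)) T_gt0.
have : T ^ 2 * - s <= T ^ 2 * Rabs s.
  by apply: Rmult_le_compat_l; [nra | rewrite -Rabs_Ropp; exact: Rle_abs].
move: bound; rewrite expand -/T; lra.
Qed.

Lemma convhull_homothets_translate x : K x ->
  convhull (fun y => exists i, homothet (o i) (tau i) K y) (vadd translation (vscale lam x)).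
Proof.
move=> Kx; set p := vadd translation (vscale lam x).
set xm := vadd (vscale 2 c) (vscale (-1) x).
set qs := map (fun i => vadd (o i) (vscale (tau i) x)) (index_enum 'I_n) ++
          map (fun i => vadd (o i) (vscale (tau i) xm)) (index_enum 'I_n).
have [hull|[v sep]] := convhull_or_separated qs p.
  apply: convhull_mono hull => q q_qs.
  by case: (List.in_app_or _ _ _ q_qs) => /List.in_map_iff [i [<- _]];
    [exists i, x | exists i, xm; split=> //; apply: K_sym].
exfalso; apply: (@separation_contra v x Kx) => i.
have := sep _ (List.in_or_app _ _ _ (or_introl (List.in_map _ _ _ (In_index_enum i)))).
have := sep _ (List.in_or_app _ _ _ (or_intror (List.in_map _ _ _ (In_index_enum i)))).
rewrite -/p; move: (dot v p) => dp; rewrite /center /xm !(dotDr, dotZr).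
have := tau_gt0 i; case: (Rle_lt_dec 0 (dot v x - dot v c)) => ?;
  [rewrite Rabs_pos_eq | rewrite Rabs_left]; nra.
Qed.

End Homothets.

Theorem theorem9 (d k n : nat) (K : point d -> Prop)
  (o : 'I_n -> point d) (tau : 'I_n -> R) :
  (0 < k)%nat ->
  (0 < n)%nat ->
  convex_body K ->
  centrally_symmetric K ->
  (forall i, 0 < tau i) ->
  (forall (a : point d) (b : R), (exists j, a j <> 0) ->
     forall s : seq 'I_n, uniq s ->
       (forall i, i \in s ->
          exists x, interiorR (homothet (o i) (tau i) K) x /\ hyperplane a b x) ->
       (size s <= k)%nat) ->
  exists t : point d, forall x, K x ->
    convhull (fun y => exists i, homothet (o i) (tau i) K y)
      (vadd t (vscale ((\big[Rplus/0]_(i < n) tau i) / INR k) x)).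
Proof.
move=> k_gt0 n_gt0 [_ [K_convex K_int]] [c K_sym] tau_gt0 depth_le.
have c_interior := center_interior K_convex K_int K_sym.
exists (translation k o tau c) => x Kx.
exact: (convhull_homothets_translate k_gt0 n_gt0 K_convex c_interior K_sym tau_gt0 depth_le Kx).
Qed.
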